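(* Let $\phi:R_1\to R_2^\varepsilon$ and $\psi:R_2\to R_1^\varepsilon$ define an $\varepsilon$-interleaving between Reeb graphs $R_1,R_2$. Let $v$ be a split node or a maximum of $R_1$, let $v'=s(v)\in R_1^\varepsilon$, and let $z$ be a split node or a maximum of $R_2^\varepsilon$. Let $M^-_\varepsilon(z)\subset R_2^\varepsilon$ be the set of points $x$ connected to $z$ by a monotone path $Q_x$ of height at most $2\varepsilon$ with $f_2^\varepsilon(q)\le f_2^\varepsilon(z)$ for all $q\in Q_x$. If $\phi(v)\in M^-_\varepsilon(z)$, then $\phi^\varepsilon(v')\in P^\varepsilon(z)\subset R_2^{2\varepsilon}$. Symmetrically, if $v$ is a join node or minimum of $R_1$, $z$ a join node or minimum of $R_2^\varepsilon$, $M^+_\varepsilon(z)$ the set of points connected to $z$ by a monotone path of height at most $2\varepsilon$ lying entirely at or above $f_2^\varepsilon(z)$, and $\phi(v)\in M^+_\varepsilon(z)$, then $\phi^\varepsilon(s(v))\in P^\varepsilon(z)$.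
   Context: A Reeb graph $R=(G,f)$ is a finite multigraph $G$ (identified with its geometric realization) with a continuous $f$ strictly monotone on each edge and injective on nodes. Split node: up-degree $>1$, down-degree $1$; join node: up-degree $1$, down-degree $>1$; maximum: up-degree $0$, down-degree $1$; minimum: up-degree $1$, down-degree $0$ (degenerate nodes are treated as superpositions of such nodes joined by zero-length edges). A morphism is a continuous function-preserving map. The height of a path is the difference between the maximum and minimum of $f$ on it; a path is monotone if $f$ is monotone along it. For $\varepsilon\ge0$, $\mathcal T^\varepsilon(R)=G\times[-\varepsilon,\varepsilon]$ with $F^\varepsilon(x,t)=f(x)+t$; $R^\varepsilon$ is the Reeb graph of $(\mathcal T^\varepsilon(R),F^\varepsilon)$ with quotient map $\pi$ and function $f^\varepsilon$; $(R^\varepsilon)^\delta$ is identified with $R^{\varepsilon+\delta}$. The shift is $\eta(x)=\pi(x,0)$, and $\eta^{2\varepsilon}:R\to R^{2\varepsilon}$ the $2\varepsilon$-shift. For a morphism $\phi:R_1\to R_2^\varepsilon$, $\phi^\delta:R_1^\delta\to R_2^{\varepsilon+\delta}$ is induced by $(x,t)\mapsto(\phi(x),t)$ on thickenings. An $\varepsilon$-interleaving is a pair $\phi:R_1\to R_2^\varepsilon$, $\psi:R_2\to R_1^\varepsilon$ with $\phi^\varepsilon\circ\psi=\eta_2^{2\varepsilon}$, $\psi^\varepsilon\circ\phi=\eta_1^{2\varepsilon}$. For $x\in R$, $P^\varepsilon(x)=\pi(\{x\}\times[-\varepsilon,\varepsilon])\subset R^\varepsilon$. For a maximum or split node $v$,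 $s(v)=\pi(v,\varepsilon)$; for a minimum or join node, $s(v)=\pi(v,-\varepsilon)$. *)

From HB Require Import structures.
From mathcomp Require Import all_boot all_order all_algebra.
From mathcomp Require Import all_classical all_reals all_analysis.
Set Implicit Arguments. Unset Strict Implicit. Unset Printing Implicit Defensive.
Import Order.TTheory GRing.Theory Num.Theory.
Import numFieldNormedType.Exports.
Local Open Scope classical_set_scope.
Local Open Scope ring_scope.

Section Reeb.
Variable R : realType.

(* A Reeb graph structure on (X, f): X is (homeomorphic to) the geometric
   realization of a finite multigraph whose edges are parametrized by the
   value of f (so f is strictly monotone on edges).  Since X is Hausdorff and
   covered by finitely many compact images, X carries the realization
   (quotient) topology. *)
Record reeb_structure (X : topologicalType) (f : X -> R) := ReebStructure {
  rs_V : finType;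
  rs_E : finType;
  rs_src : rs_E -> rs_V;
  rs_tgt : rs_E -> rs_V;
  rs_node : rs_V -> X;
  rs_edge : rs_E -> R -> X;
  rs_f_cont : continuous f;
  rs_hausdorff : hausdorff_space X;
  rs_f_node_inj : injective (f \o rs_node);
  rs_edge_lt : forall e, f (rs_node (rs_src e)) < f (rs_node (rs_tgt e));
  rs_edge_cont : forall e,
    {within `[f (rs_node (rs_src e)), f (rs_node (rs_tgt e))],
       continuous (rs_edge e)};
  rs_edge_src : forall e, rs_edge e (f (rs_node (rs_src e))) = rs_node (rs_src e);
  rs_edge_tgt : forall e, rs_edge e (f (rs_node (rs_tgt e))) = rs_node (rs_tgt e);
  rs_edge_f : forall e t, f (rs_node (rs_src e)) <= t <= f (rs_node (rs_tgt e)) ->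
    f (rs_edge e t) = t;
  rs_cover : forall x : X, (exists v, x = rs_node v) \/
    (exists e t, f (rs_node (rs_src e)) < t < f (rs_node (rs_tgt e)) /\ x = rs_edge e t);
  rs_node_not_edge : forall v e t, f (rs_node (rs_src e)) < t < f (rs_node (rs_tgt e)) ->
    rs_node v <> rs_edge e t;
  rs_edge_inj : forall e e' t t',
    f (rs_node (rs_src e)) < t < f (rs_node (rs_tgt e)) ->
    f (rs_node (rs_src e')) < t' < f (rs_node (rs_tgt e')) ->
    rs_edge e t = rs_edge e' t' -> e = e'
}.

Definition is_reeb_graph (X : topologicalType) (f : X -> R) : Prop :=
  exists S : reeb_structure f, True.

Definition updeg (X : topologicalType) (f : X -> R) (S : reeb_structure f)
  (u : rs_V S) : nat := #|[pred e | rs_src e == u]|.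
Definition downdeg (X : topologicalType) (f : X -> R) (S : reeb_structure f)
  (u : rs_V S) : nat := #|[pred e | rs_tgt e == u]|.

(* x is a split node or a maximum (possibly as the upper part of a degenerate
   node): a node with up-degree different from 1. *)
Definition split_or_max (X : topologicalType) (f : X -> R) (x : X) : Prop :=
  exists (S : reeb_structure f) (u : rs_V S), rs_node u = x /\ updeg u <> 1%N.
Definition join_or_min (X : topologicalType) (f : X -> R) (x : X) : Prop :=
  exists (S : reeb_structure f) (u : rs_V S), rs_node u = x /\ downdeg u <> 1%N.

Definition thick_set (X : Type) (eps : R) : set (X * R) :=
  [set p | `|p.2| <= eps].
Arguments thick_set X eps : clear implicits.
Definition thick_fun (X : Type) (f : X -> R) (p : X * R) : R := f p.1 + p.2.

(* (Y, pi, g) is the Reeb graph of (T^eps(X), F^eps): pi restricted to the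
   thickening is onto Y, identifies exactly the points lying in the same
   connected component of a level set of F^eps, Y has the quotient topology,
   and g o pi = F^eps. *)
Definition is_thickening (X Y : topologicalType) (f : X -> R) (eps : R)
  (pi : X * R -> Y) (g : Y -> R) : Prop :=
  [/\ (forall y : Y, exists p, thick_set X eps p /\ pi p = y),
      (forall p q, thick_set X eps p -> thick_set X eps q ->
         (pi p = pi q <->
          (thick_fun f p = thick_fun f q /\
           connected_component
             (thick_set X eps `&` [set r | thick_fun f r = thick_fun f p]) p q))),
      (forall p, thick_set X eps p -> g (pi p) = thick_fun f p) &
      (forall U : set Y, open U <->
         exists O : set (X * R), open O /\
           pi @^-1` U `&` thick_set X eps = O `&` thick_set X eps)].

Definition reeb_morphism (X Y : topologicalType) (f : X -> R) (g : Y -> R)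
  (h : X -> Y) : Prop := continuous h /\ forall x, g (h x) = f x.

Definition path_between (Y : topologicalType) (gam : R -> Y) (x z : Y) : Prop :=
  [/\ {within `[0, 1], continuous gam}, gam 0 = x & gam 1 = z].
Definition monotone_path (Y : topologicalType) (g : Y -> R) (gam : R -> Y) : Prop :=
  {in `[0, 1] &, {homo (g \o gam) : a b / a <= b}} \/
  {in `[0, 1] &, {homo (g \o gam) : a b / a <= b >-> b <= a}}.
Definition path_height_le (Y : topologicalType) (g : Y -> R) (gam : R -> Y) (h : R) : Prop :=
  forall a b, a \in `[0, 1] -> b \in `[0, 1] -> g (gam a) - g (gam b) <= h.

Definition Mminus (Y : topologicalType) (g : Y -> R) (eps : R) (z : Y) : set Y :=
  [set x | exists gam, [/\ path_between gam x z, monotone_path g gam,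
     path_height_le g gam (2 * eps) &
     forall a, a \in `[0, 1] -> g (gam a) <= g z]].
Definition Mplus (Y : topologicalType) (g : Y -> R) (eps : R) (z : Y) : set Y :=
  [set x | exists gam, [/\ path_between gam x z, monotone_path g gam,
     path_height_le g gam (2 * eps) &
     forall a, a \in `[0, 1] -> g z <= g (gam a)]].

Definition Pset (Y W : Type) (rho : Y * R -> W) (eps : R) (z : Y) : set W :=
  [set w | exists t, `|t| <= eps /\ w = rho (z, t)].

End Reeb.

From HB Require Import structures.
From mathcomp Require Import all_boot all_order all_algebra.
From mathcomp Require Import all_classical all_reals all_analysis.
From mathcomp Require Import lra.
Set Implicit Arguments. Unset Strict Implicit. Unset Printing Implicit Defensive.
Import Order.TTheory GRing.Theory Num.Theory.
Import numFieldNormedType.Exports.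
Local Open Scope classical_set_scope.
Local Open Scope ring_scope.

(* By definition of phi^eps, phi^eps(s(v)) = rho2 (phi v, eps)
   (resp. rho2 (phi v, -eps)).  Put c = g2 (phi v) + eps (resp. - eps).  If
   phi v lies in M^-_eps(z) (resp. M^+_eps(z)), the monotone path gam from
   phi v to z stays in the band [g2 (phi v), g2 (phi v) + 2 eps] (resp.
   [g2 (phi v) - 2 eps, g2 (phi v)]), i.e. within eps of c.  Hence the points
   (gam s, c - g2 (gam s)) form a connected subset of the level set
   {F^eps = c} of the thickening, so the quotient map rho2 identifies its
   endpoints: rho2 (phi v, c - g2 (phi v)) = rho2 (z, c - g2 z), a point of
   P^eps(z). *)

Section Thickening.
Variables (R : realType) (X Y : topologicalType).

Lemma thick_fun_continuous (f : X -> R) :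
  continuous f -> continuous (thick_fun f).
Proof.
move=> hf p; rewrite /thick_fun.
apply: (@cvgD _ _ _ _ _ (fun q : X * R => f q.1) (fun q : X * R => q.2)).
  by apply: (cvg_comp _ _ (@cvg_fst _ _ _ _ _)); exact: hf.
exact: cvg_snd.
Qed.

(* The function g of the thickening R^eps is continuous, since Y carries the
   quotient topology and g o pi = F^eps on the thickening. *)
Lemma thickening_fun_continuous (f : X -> R) (eps : R)
    (proj : X * R -> Y) (g : Y -> R) :
  continuous f -> is_thickening f eps proj g -> continuous g.
Proof.
move=> hf [_ _ hg hopen]; apply/continuousP => A oA.
apply hopen; exists (thick_fun f @^-1` A); split.
  by move: (thick_fun_continuous hf) => /continuousP; apply.
apply/seteqP; split => p [Ap Tp]; split => //; rewrite /preimage /=.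
  by rewrite -hg.
by rewrite hg.
Qed.

End Thickening.

Section BandPath.
Variables (R : realType) (Y W : topologicalType).
Variables (g : Y -> R) (eps : R) (rho : Y * R -> W) (k : W -> R).
Hypotheses (g_cont : continuous g) (hW : is_thickening g eps rho k).

Let level_section (c : R) (y : Y) : Y * R := (y, c - g y).

Let level_section_continuous (c : R) : continuous (level_section c).
Proof.
move=> y; apply: (@cvg_pair _ _ _ (nbhs y) (nbhs y) (nbhs (c - g y)) _ _ _
  id (fun y => c - g y)); first exact: cvg_id.
by apply: cvgB; [exact: cvg_cst | exact: g_cont].
Qed.

Let level_section_level (c : R) (y : Y) : thick_fun g (level_section c y) = c.
Proof. by rewrite /thick_fun /= addrC subrK. Qed.

(* A path from x to z whose g-values stay within eps of a level c lifts to a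
   connected subset of the level set {F^eps = c} of the thickening; hence
   rho identifies the lifts of its two endpoints. *)
Lemma band_path_identifies (gam : R -> Y) (x z : Y) (c : R) :
  path_between gam x z ->
  (forall s, s \in `[0, 1] -> `|c - g (gam s)| <= eps) ->
  rho (x, c - g x) = rho (z, c - g z).
Proof.
move=> [gam_cont <- <-] band; have [_ hid _ _] := hW.
have i0 : (0 : R) \in `[0, 1] by rewrite in_itv /= lexx ler01.
have i1 : (1 : R) \in `[0, 1] by rewrite in_itv /= lexx ler01.
apply/hid; rewrite /thick_set /=; [exact: band | exact: band |].
split; first by rewrite !(level_section_level c).
exists (level_section c @` (gam @` `[0, 1])); last by exists (gam 1); [exists 1|].
split; first by exists (gam 0); [exists 0|].
- move=> q [y [s s01 <-] <-]; split; first exact: band.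
  by rewrite /= !(level_section_level c).
- apply: connected_continuous_connected; last first.
    by apply: continuous_subspaceT; exact: level_section_continuous.
  by apply: connected_continuous_connected => //; exact: segment_connected.
Qed.

Lemma band_path_Pset (gam : R -> Y) (x z : Y) (c : R) :
  path_between gam x z ->
  (forall s, s \in `[0, 1] -> `|c - g (gam s)| <= eps) ->
  Pset rho eps z (rho (x, c - g x)).
Proof.
move=> gam_xz band; exists (c - g z); split.
  by case: gam_xz => _ _ <-; apply: band; rewrite in_itv /= lexx ler01.
exact: band_path_identifies gam_xz band.
Qed.

End BandPath.

Section MonotonePaths.
Variables (R : realType) (Y : topologicalType) (g : Y -> R).

Let itv01_ge0 (s : R) : s \in `[0, 1] -> 0 <= s.
Proof. by rewrite in_itv /= => /andP[]. Qed.
Let itv01_le1 (s : R) : s \in `[0, 1] -> s <= 1.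
Proof. by rewrite in_itv /= => /andP[]. Qed.
Let itv01_0 : (0 : R) \in `[0, 1]. Proof. by rewrite in_itv /= lexx ler01. Qed.
Let itv01_1 : (1 : R) \in `[0, 1]. Proof. by rewrite in_itv /= lexx ler01. Qed.

Lemma monotone_path_ge_start (gam : R -> Y) (s : R) :
  monotone_path g gam -> g (gam 0) <= g (gam 1) -> s \in `[0, 1] ->
  g (gam 0) <= g (gam s).
Proof.
move=> [up | down] ends s01; first exact: up _ _ itv01_0 s01 (itv01_ge0 s01).
exact: le_trans ends (down _ _ s01 itv01_1 (itv01_le1 s01)).
Qed.

Lemma monotone_path_le_start (gam : R -> Y) (s : R) :
  monotone_path g gam -> g (gam 1) <= g (gam 0) -> s \in `[0, 1] ->
  g (gam s) <= g (gam 0).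
Proof.
move=> [up | down] ends s01; last exact: down _ _ itv01_0 s01 (itv01_ge0 s01).
exact: le_trans (up _ _ s01 itv01_1 (itv01_le1 s01)) ends.
Qed.

Lemma Mminus_band (eps : R) (z x : Y) :
  Mminus g eps z x -> exists gam : R -> Y, path_between gam x z /\
    forall s, s \in `[0, 1] -> `|(g x + eps) - g (gam s)| <= eps.
Proof.
move=> [gam [gam_xz mono height below]]; exists gam; split => // s s01.
have [_ g0 g1] := gam_xz.
have lo : g x <= g (gam s).
  rewrite -g0; apply: monotone_path_ge_start => //.
  by rewrite g1; exact: below.
have := height s 0 s01 itv01_0; rewrite g0 => hi.
rewrite ler_norml; apply/andP; split; lra.
Qed.

Lemma Mplus_band (eps : R) (z x : Y) :
  Mplus g eps z x -> exists gam : R -> Y, path_between gam x z /\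
    forall s, s \in `[0, 1] -> `|(g x - eps) - g (gam s)| <= eps.
Proof.
move=> [gam [gam_xz mono height above]]; exists gam; split => // s s01.
have [_ g0 g1] := gam_xz.
have hi : g (gam s) <= g x.
  rewrite -g0; apply: monotone_path_le_start => //.
  by rewrite g1; exact: above.
have := height 0 s itv01_0 s01; rewrite g0 => lo.
rewrite ler_norml; apply/andP; split; lra.
Qed.

End MonotonePaths.

Theorem lemma1 (R : realType) (eps : R) (heps : 0 <= eps)
  (X1 X2 Y1 Y2 W1 W2 : topologicalType)
  (f1 : X1 -> R) (f2 : X2 -> R) (g1 : Y1 -> R) (g2 : Y2 -> R)
  (k1 : W1 -> R) (k2 : W2 -> R)
  (pi1 : X1 * R -> Y1) (pi2 : X2 * R -> Y2)
  (rho1 : Y1 * R -> W1) (rho2 : Y2 * R -> W2)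
  (hR1 : is_reeb_graph f1) (hR2 : is_reeb_graph f2)
  (hY1 : is_thickening f1 eps pi1 g1) (hY2 : is_thickening f2 eps pi2 g2)
  (hW1 : is_thickening g1 eps rho1 k1) (hW2 : is_thickening g2 eps rho2 k2)
  (phi : X1 -> Y2) (psi : X2 -> Y1)
  (hphi : reeb_morphism f1 g2 phi) (hpsi : reeb_morphism f2 g1 psi)
  (phie : Y1 -> W2) (psie : Y2 -> W1)
  (hphie : forall x t, `|t| <= eps -> phie (pi1 (x, t)) = rho2 (phi x, t))
  (hpsie : forall x t, `|t| <= eps -> psie (pi2 (x, t)) = rho1 (psi x, t))
  (hint1 : forall x : X2, phie (psi x) = rho2 (pi2 (x, 0), 0))
  (hint2 : forall x : X1, psie (phi x) = rho1 (pi1 (x, 0), 0)) :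
  (forall (v : X1) (z : Y2), split_or_max f1 v -> split_or_max g2 z ->
     Mminus g2 eps z (phi v) -> Pset rho2 eps z (phie (pi1 (v, eps)))) /\
  (forall (v : X1) (z : Y2), join_or_min f1 v -> join_or_min g2 z ->
     Mplus g2 eps z (phi v) -> Pset rho2 eps z (phie (pi1 (v, - eps)))).
Proof.
have [S _] := hR2.
have g2_cont : continuous g2 :=
  thickening_fun_continuous (rs_f_cont S) hY2.
split=> v z _ _.
- move=> /Mminus_band[gam [gam_xz band]].
  have := band_path_Pset g2_cont hW2 gam_xz band.
  by rewrite hphie ?ger0_norm // addrAC subrr add0r.
- move=> /Mplus_band[gam [gam_xz band]].
  have := band_path_Pset g2_cont hW2 gam_xz band.
  by rewrite hphie ?normrN ?ger0_norm // addrAC subrr add0r.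
Qed.
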